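(* For all integers $k\ge 1$ and $t\ge 1$, $$B_0(k+1,2t)+B_1(k,2t-1)=B_1(k,2t-2k-1)+p_{de}(2t-k-1)+p_{do}(2t-2k-1).$$
   Context: For a partition $\pi$, $s(\pi)$ is its smallest part. For $j\ge1$, $\mathrm{Spt}j_{do}(n)$ is the set of partitions $\pi$ of $n$ in which $s(\pi)$ occurs exactly $j$ times and the remaining parts (those larger than $s(\pi)$) are pairwise distinct and each has parity different from that of $s(\pi)$. $B_0(j,n)$ (resp. $B_1(j,n)$) is the number of $\pi\in\mathrm{Spt}j_{do}(n)$ whose number of parts greater than $s(\pi)$ is even (resp. odd); $B_0(j,n)=B_1(j,n)=0$ for $n\le 0$. $p_{de}(n)$ (resp. $p_{do}(n)$) is the number of partitions of $n$ into distinct even (resp. distinct odd) parts, with value $1$ at $n=0$ and $0$ for $n<0$. *)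

From mathcomp Require Import all_boot all_order all_algebra.
Set Implicit Arguments. Unset Strict Implicit. Unset Printing Implicit Defensive.

(* A partition of n is encoded by its multiplicity function:
   m i = number of times the part (i+1) occurs, for parts 1..n
   (each multiplicity is at most n, hence the codomain 'I_n.+1). *)
Definition multfun (n : nat) := {ffun 'I_n -> 'I_n.+1}.

Definition is_partition (n : nat) (m : multfun n) : bool :=
  \sum_(i < n) i.+1 * m i == n.

(* pi is in Spt j_do(n) with smallest part s(pi) = s.+1, and the number of
   parts larger than s(pi) has parity b (false = even, true = odd). *)
Definition in_Sptjdo_par (j n : nat) (b : bool) (m : multfun n) : bool :=
  is_partition m &&
  [exists s : 'I_n,
     [&& 0 < m s,
         [forall i : 'I_n, (i < s) ==> (m i == 0 :> nat)],
         m s == j :> nat,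
         [forall i : 'I_n, (s < i) ==>
             ((m i <= 1) && ((0 < m i) ==> (odd i.+1 != odd s.+1)))]
       & odd (\sum_(i < n | s < i) m i) == b]].

(* B_0 (b = false) and B_1 (b = true); zero for n <= 0. *)
Definition Bcount (b : bool) (j : nat) (n : int) : nat :=
  match n with
  | Posz n' => #|[set m : multfun n' | in_Sptjdo_par j b m]|
  | Negz _ => 0
  end.
Definition B0 := Bcount false.
Definition B1 := Bcount true.

Definition p_dpar (par : bool) (n : int) : nat :=
  match n with
  | Posz n' => #|[set m : multfun n' | is_partition m &&
                  [forall i : 'I_n', (m i <= 1) && ((0 < m i) ==> (odd i.+1 == par))]]|
  | Negz _ => 0
  end.
Definition p_de := p_dpar false.
Definition p_do := p_dpar true.

From mathcomp Require Import all_boot all_order all_algebra.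
From mathcomp Require Import zify.
Set Implicit Arguments. Unset Strict Implicit. Unset Printing Implicit Defensive.

(* A partition in Spt j_do(n) with smallest part s is determined by the rest of
   the partition: a partition of n - js into distinct parts of parity opposite to
   s, i.e. into distinct parts taken from s+1, s+3, s+5, ..., with the same
   number of parts. Writing D_a(N, b) for the number of partitions of N into
   distinct parts from a, a+2, a+4, ... whose number of parts has parity b,
   B_b(j, n) = sum_(s >= 1) D_(s+1)(n - js, b). Deciding whether the part a is
   used gives D_a(N, b) = D_(a+2)(N, b) + D_(a+2)(N - a, 1 - b), which turns the
   s-th term of B_1(k, 2t-2k-1) into the sum of the (s+2)-th terms of B_0(k+1, 2t)
   and B_1(k, 2t-1). The two remaining terms of the left-hand side are
   p_de(2t-k-1) (for s = 1) and p_do(2t-2k-1) (for s = 2); the latter needs one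
   more step of the recursion (a = 1) and the fact that a partition into odd
   parts has an odd number of parts iff its size is odd. *)

Import GRing.Theory Num.Theory.

(* Negative sizes count nothing, which lets sizes such as
   n - js be written without case distinctions. *)
Fixpoint dcount_upto (Q : pred nat) (M : nat) (N : int) (b : bool) : nat :=
  if M is M'.+1 then
    (dcount_upto Q M' N b + (if Q M then dcount_upto Q M' (N - M%:Z)%R (~~ b) else 0))%N
  else (N == 0) && ~~ b.

Definition dcount (Q : pred nat) (N : int) (b : bool) : nat := dcount_upto Q `|N|%N N b.

Definition ap2 (a : nat) : pred nat := fun x => (a <= x)%N && (odd x == odd a).

Section DistinctCount.
Local Open Scope ring_scope.
Implicit Types (Q : pred nat) (M : nat) (N : int) (b : bool).

Lemma dcount_upto_neg Q M N b : N < 0 -> dcount_upto Q M N b = 0%N.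
Proof.
elim: M N b => [|M IH] N b N_lt0 /=; first by have -> : (N == 0) = false by lia.
by rewrite !IH //; [case: ifP | lia].
Qed.

Lemma dcount_neg Q N b : N < 0 -> dcount Q N b = 0%N.
Proof. exact: dcount_upto_neg. Qed.

Lemma dcount_upto_ge Q M N b : N <= M%:Z -> dcount_upto Q M N b = dcount Q N b.
Proof.
have [N_lt0 _|] := ltrP N 0; first by rewrite dcount_neg ?dcount_upto_neg.
case: N => // n _ le_nM; rewrite -(subnKC (le_nM : (n <= M)%N)).
elim: (M - n)%N => [|d IH]; first by rewrite addn0.
by rewrite addnS /= IH (@dcount_upto_neg _ _ (_ - _)) ?if_same ?addn0 //; lia.
Qed.

Lemma dcount_upto_ext Q Q' M N b :
  Q =1 Q' -> dcount_upto Q M N b = dcount_upto Q' M N b.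
Proof. by move=> eqQ; elim: M N b => [|M IH] N b //=; rewrite !IH eqQ. Qed.

Lemma dcount_upto_predU1 Q a M N b : (0 < a)%N -> ~~ Q a ->
  dcount_upto (predU1 a Q) M N b =
  (dcount_upto Q M N b + (if (a <= M)%N then dcount_upto Q M (N - a%:Z) (~~ b) else 0))%N.
Proof.
move=> a_gt0 Qa; elim: M N b => [|M IH] N b /=; first by rewrite leqNgt a_gt0 addn0.
rewrite !IH negbK.
have [eq_a|neq_a] := eqVneq M.+1 a.
  by subst a; rewrite ltnn ltnSn (negbTE Qa) /= !addn0.
have -> : (a <= M.+1)%N = (a <= M)%N by rewrite leq_eqVlt eq_sym (negbTE neq_a).
rewrite (_ : N - M.+1%:Z - a%:Z = N - a%:Z - M.+1%:Z); last by lia.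
by case: (Q M.+1); case: (a <= M)%N => /=; lia.
Qed.

Lemma dcount_predU1 Q a N b : (0 < a)%N -> ~~ Q a ->
  dcount (predU1 a Q) N b = (dcount Q N b + dcount Q (N - a%:Z) (~~ b))%N.
Proof.
move=> a_gt0 Qa; rewrite /dcount dcount_upto_predU1 //; case: ifP => le_a.
  by rewrite [dcount_upto _ _ (N - _) _]dcount_upto_ge //; lia.
by rewrite addn0 [dcount_upto _ _ (N - _) _]dcount_upto_neg //; lia.
Qed.

Lemma dcount_ap2 a N b : (0 < a)%N ->
  dcount (ap2 a) N b = (dcount (ap2 a.+2) N b + dcount (ap2 a.+2) (N - a%:Z) (~~ b))%N.
Proof.
move=> a_gt0; rewrite -dcount_predU1 //; last by rewrite /ap2 ltnNge leqnSn.
apply: dcount_upto_ext => x; rewrite /ap2 /=.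
have [->|ne_a] := eqVneq x a; first by rewrite leqnn eqxx.
have [->|ne_a1] := eqVneq x a.+1; first by rewrite ltnn leqnSn /=; case: (odd a).
by rewrite negbK (_ : (a.+1 < x)%N = (a <= x)%N) //; lia.
Qed.

Lemma dcount_parity Q (z : int) b : (forall x, Q x -> odd x) ->
  dcount Q (z * 2 + (b : nat)%:Z) (~~ b) = 0%N.
Proof.
move=> Qodd; rewrite /dcount; move: `|_|%N => M.
elim: M z b => [|M IH] z b /=; first by case: b; lia.
rewrite IH; case: ifP => // /Qodd odd_M.
have [q defM] : exists q, M.+1 = q.*2.+1 by exists M.+1./2; rewrite -[LHS]odd_double_half odd_M.
rewrite (_ : _ - _ = (z - q%:Z - (~~ b : nat)%:Z) * 2 + (~~ b : nat)%:Z); first exact: IH.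
by rewrite defM; case: b; lia.
Qed.

End DistinctCount.

Section FfunUpdate.
Variables (I : finType) (T : Type).
Implicit Types (m : {ffun I -> T}) (x : I).

Definition ffun_upd m x (v : T) : {ffun I -> T} := [ffun i => if i == x then v else m i].

Lemma ffun_updE m x v i : ffun_upd m x v i = if i == x then v else m i.
Proof. exact: ffunE. Qed.

Lemma ffun_upd_id m x : ffun_upd m x (m x) = m.
Proof. by apply/ffunP => i; rewrite ffunE; case: eqP => // ->. Qed.

Lemma ffun_updI m x v w : ffun_upd (ffun_upd m x v) x w = ffun_upd m x w.
Proof. by apply/ffunP => i; rewrite !ffunE; case: eqP. Qed.

Lemma ffun_upd_same m x v : ffun_upd m x v x = v.
Proof. by rewrite ffunE eqxx. Qed.

Lemma sum_ffun_upd (G : I -> T -> nat) m x v :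
  \sum_i G i (ffun_upd m x v i) + G x (m x) = \sum_i G i (m i) + G x v.
Proof.
rewrite (bigD1 x) // [in RHS](bigD1 x) //= ffun_upd_same.
have -> : \sum_(i | i != x) G i (ffun_upd m x v i) = \sum_(i | i != x) G i (m i).
  by apply: eq_bigr => i /negbTE ne_ix; rewrite ffunE ne_ix.
lia.
Qed.

End FfunUpdate.

Lemma card_ffun_upd (I T : finType) (A B : {set {ffun I -> T}}) (x : I) (u v : T) :
  {in A, forall m : {ffun I -> T}, m x = u /\ ffun_upd m x v \in B} ->
  {in B, forall m : {ffun I -> T}, m x = v /\ ffun_upd m x u \in A} -> #|A| = #|B|.
Proof.
move=> AB BA; have inj_upd : {in A &, injective (fun m => ffun_upd m x v)}.
  move=> m1 m2 /AB[m1x _] /AB[m2x _] /(congr1 (fun m => ffun_upd m x u)) /=.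
  by rewrite !ffun_updI -{1}m1x -m2x !ffun_upd_id.
rewrite -(card_in_imset inj_upd); apply: eq_card => m.
apply/imsetP/idP => [[m' /AB[_ ?] ->] // | Bm].
have [mx Am'] := BA m Bm; exists (ffun_upd m x u) => //.
by rewrite ffun_updI -mx ffun_upd_id.
Qed.

Lemma card_exists_unique (I T : finType) (P : I -> pred T) :
  (forall i1 i2 y, P i1 y -> P i2 y -> i1 = i2) ->
  #|[set y | [exists i, P i y]]| = \sum_i #|[set y | P i y]|.
Proof.
move=> uniqP; have card_sum (Q : pred T) : #|[set y | Q y]| = \sum_y (Q y : nat).
  by rewrite -sum1_card big_mkcond; apply: eq_bigr => y _; rewrite inE; case: (Q y).
rewrite card_sum (eq_bigr _ (fun i _ => card_sum (P i))) exchange_big /=.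
apply: eq_bigr => y _; have [[i0 Pi0]|noP] := existsP; last first.
  by rewrite big1 // => i _; case Pi: (P i y) => //; case: noP; exists i.
rewrite (bigD1 i0) //= Pi0 big1 // => i ne_i.
by case Pi: (P i y) => //; rewrite (uniqP _ _ _ Pi Pi0) eqxx in ne_i.
Qed.

Section Multiplicities.
Variable n : nat.
Implicit Types (m : multfun n) (Q : pred nat) (N : int) (b : bool).

Definition weight m : nat := \sum_(i < n) i.+1 * m i.
Definition nparts m : nat := \sum_(i < n) (m i : nat).

Lemma weight_upd m x v :
  (weight (ffun_upd m x v) + x.+1 * m x = weight m + x.+1 * v)%N.
Proof. exact: (sum_ffun_upd (fun (i : 'I_n) (c : 'I_n.+1) => i.+1 * c)%N m x v). Qed.

Lemma nparts_upd m x v : (nparts (ffun_upd m x v) + m x = nparts m + v)%N.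
Proof. exact: (sum_ffun_upd (fun (i : 'I_n) (c : 'I_n.+1) => c : nat) m x v). Qed.

Lemma is_partitionE m : is_partition m = (weight m == n).
Proof. by []. Qed.

Definition distinct_parts Q M m : bool :=
  [forall i, (m i <= 1)%N && ((0 < m i)%N ==> Q i.+1 && (i < M)%N)].

Definition dpart_set Q M N b : {set multfun n} :=
  [set m | [&& distinct_parts Q M m, Posz (weight m) == N & odd (nparts m) == b]].

Lemma card_dpart_set0 Q N b : #|dpart_set Q 0 N b| = (N == 0) && ~~ b.
Proof.
set z : multfun n := [ffun => ord0].
have z_only m : distinct_parts Q 0 m -> m = z.
  move=> /forallP dm; apply/ffunP => i; apply/val_inj; rewrite ffunE /=.
  by move: (dm i); rewrite ltn0 andbF implybF -eqn0Ngt => /andP[_ /eqP].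
have weight_z : weight z = 0%N by apply: big1 => i _; rewrite ffunE muln0.
have nparts_z : nparts z = 0%N by apply: big1 => i _; rewrite ffunE.
have -> : dpart_set Q 0 N b = if (N == 0) && ~~ b then [set z] else set0.
  apply/setP => m; rewrite !inE; apply/idP/idP.
    by case/and3P => /z_only -> /eqP <- /eqP <-; rewrite weight_z nparts_z inE.
  case: ifP; rewrite ?inE // => /andP[/eqP -> /negbTE ->] /eqP ->.
  by rewrite weight_z nparts_z eqxx andbT; apply/forallP => i; rewrite ffunE.
by case: ifP; rewrite ?cards1 ?cards0.
Qed.

Section AddLargestPart.
Variables (Q : pred nat) (M : nat).
Hypothesis ltMn : (M < n)%N.
Let x : 'I_n := Ordinal ltMn.
Let one : 'I_n.+1 := inord 1.

Lemma one_val : one = 1%N :> nat.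
Proof. by rewrite inordK // ltnS (leq_ltn_trans _ ltMn). Qed.

Lemma distinct_partsS m :
  distinct_parts Q M.+1 m && (m x == ord0) = distinct_parts Q M m.
Proof.
apply/andP/forallP => [[/forallP dm /eqP mx0] i | dm].
  have /andP[-> /implyP] := dm i; have [-> _|ne_ix lt_iM] := eqVneq i x.
    by rewrite mx0.
  apply/implyP=> /lt_iM /andP[-> /=]; rewrite ltnS leq_eqVlt.
  by have -> : (i == M :> nat) = false by apply: contraNF ne_ix => /eqP i_M; apply/eqP/val_inj.
split; first by apply/forallP => i; have /andP[-> /implyP ltM] := dm i;
  apply/implyP => /ltM /andP[-> /ltnW].
apply/eqP/val_inj; have /andP[_ /implyP] := dm x; rewrite ltnn andbF.
by case: posnP => // _ /(_ isT).
Qed.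

Lemma dpart_set_add m N b : Q M.+1 -> m \in dpart_set Q M (N - M.+1%:Z)%R (~~ b) ->
  m x = ord0 /\ ffun_upd m x one \in dpart_set Q M.+1 N b.
Proof.
move=> QM; rewrite !inE => /and3P[dm /eqP wm /eqP pm].
have mx0 : m x = ord0 by move: dm; rewrite -distinct_partsS => /andP[_ /eqP].
split=> //; apply/and3P; split.
- apply/forallP => i; rewrite ffun_updE; case: eqP => [-> | _].
    by rewrite one_val QM /= ltnSn.
  by have /forallP/(_ i)/andP[-> /implyP ltM] := dm; apply/implyP => /ltM /andP[-> /ltnW].
- by have := weight_upd m x one; rewrite mx0 one_val /= => w_upd; apply/eqP; lia.
- by have := nparts_upd m x one; rewrite mx0 one_val addn0 addn1 => -> /=; rewrite pm negbK.
Qed.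

Lemma dpart_set_remove m N b : m \in dpart_set Q M.+1 N b -> m x != ord0 ->
  [/\ Q M.+1, m x = one & ffun_upd m x ord0 \in dpart_set Q M (N - M.+1%:Z)%R (~~ b)].
Proof.
rewrite !inE => /and3P[dm /eqP wm /eqP pm] mx_ne0.
have mx_pos : (0 < m x)%N by rewrite lt0n.
have /andP[mx_le1 /implyP/(_ mx_pos)/andP[QM _]] := forallP dm x.
have mx1 : m x = one by apply/val_inj => /=; rewrite one_val; apply/eqP; rewrite eqn_leq mx_le1.
split=> //; apply/and3P; split.
- rewrite -distinct_partsS ffun_upd_same eqxx andbT; apply/forallP => i.
  by rewrite ffun_updE; case: eqP => // _; have /forallP := dm.
- by have := weight_upd m x ord0; rewrite mx1 one_val /= => w_upd; apply/eqP; lia.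
- by have := nparts_upd m x ord0; rewrite mx1 one_val addn0 addn1 /= -pm => <-; rewrite negbK.
Qed.

Lemma card_dpart_setS N b :
  #|dpart_set Q M.+1 N b| =
  (#|dpart_set Q M N b| + (if Q M.+1 then #|dpart_set Q M (N - M.+1%:Z)%R (~~ b)| else 0))%N.
Proof.
rewrite -(cardsID [set m : multfun n | m x == ord0]); congr (_ + _).
  by apply: eq_card => m; rewrite !inE -distinct_partsS; case: (_ == ord0); rewrite ?andbF ?andbT.
case: ifP => [QM | nQM].
  apply/esym/(card_ffun_upd (x := x) (u := ord0) (v := one)) => m.
    move/(dpart_set_add QM) => [mx0 Am]; split=> //.
    by rewrite in_setD Am andbT inE ffun_upd_same -val_eqE /= one_val.
  by rewrite in_setD inE => /andP[mx_ne0 /dpart_set_remove/(_ mx_ne0)[]].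
apply/eqP; rewrite cards_eq0; apply/eqP/setP => m; rewrite in_setD inE in_set0.
by apply/negP => /andP[mx_ne0 /dpart_set_remove/(_ mx_ne0)[]]; rewrite nQM.
Qed.

End AddLargestPart.

Lemma card_dpart_set Q M N b : (M <= n)%N -> #|dpart_set Q M N b| = dcount_upto Q M N b.
Proof.
elim: M N b => [|M IH] N b le_Mn; first exact: card_dpart_set0.
by rewrite card_dpart_setS // !IH // ltnW.
Qed.

Definition spt_at j b (s : 'I_n) m : bool :=
  [&& 0 < m s,
      [forall i : 'I_n, (i < s) ==> (m i == 0 :> nat)],
      m s == j :> nat,
      [forall i : 'I_n, (s < i) ==>
         ((m i <= 1) && ((0 < m i) ==> (odd i.+1 != odd s.+1)))]
    & odd (\sum_(i < n | s < i) m i) == b]%N.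

Lemma card_Sptjdo j b :
  #|[set m : multfun n | in_Sptjdo_par j b m]| =
  \sum_(s < n) #|[set m : multfun n | is_partition m && spt_at j b s m]|.
Proof.
rewrite -card_exists_unique; last first.
  move=> s1 s2 m; rewrite /spt_at.
  move=> /andP[_ /and5P[pos1 /forallP below1 _ _ _]].
  move=> /andP[_ /and5P[pos2 /forallP below2 _ _ _]].
  case: (ltngtP s1 s2) => [lt_s|lt_s|/val_inj //].
    by move: (below2 s1); rewrite lt_s => /eqP m0; rewrite m0 in pos1.
  by move: (below1 s2); rewrite lt_s => /eqP m0; rewrite m0 in pos2.
apply: eq_card => m; rewrite !inE /in_Sptjdo_par.
case: (is_partition m); last by apply/esym/existsP => -[].
by rewrite andTb; apply: eq_existsb => s.
Qed.

Lemma nparts_above m (s : 'I_n) : (forall i : 'I_n, (i < s)%N -> m i = 0%N :> nat) ->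
  nparts m = (m s + \sum_(i < n | (s < i)%N) m i)%N.
Proof.
move=> zero_below; rewrite /nparts (bigD1 s) //=; congr (_ + _).
rewrite [LHS]big_mkcond [RHS]big_mkcond; apply: eq_bigr => i _.
case: (ltngtP i s) => [/zero_below -> | lt_si | /val_inj ->]; rewrite ?eqxx //.
  by case: (_ != _).
by rewrite (_ : i != s) //; apply: contraTneq lt_si => ->; rewrite ltnn.
Qed.

Section SmallestPart.
Variables (j : nat) (b : bool) (s : 'I_n).
Hypothesis j_gt0 : (0 < j)%N.

Let spt_set := [set m : multfun n | is_partition m && spt_at j b s m].
Let rest_set := dpart_set (ap2 s.+2) n (n%:Z - (j * s.+1)%:Z)%R b.

Lemma spt_set_add m :
  m \in rest_set -> m s = ord0 /\ ffun_upd m s (inord j) \in spt_set.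
Proof.
rewrite inE => /and3P[/forallP dm /eqP wm /eqP pm].
have zero_le_s (i : 'I_n) : (i <= s)%N -> m i = 0%N :> nat.
  move=> le_is; have /andP[_ /implyP pos] := dm i.
  by apply/eqP; rewrite eqn0Ngt; apply/negP => /pos /andP[/andP[lt _] _]; lia.
have ms0 : m s = ord0 by apply/val_inj/zero_le_s.
have le_j : (j <= n)%N by apply: (@leq_trans (j * s.+1)); [rewrite leq_pmulr | lia].
have jval : (inord j : 'I_n.+1) = j :> nat by rewrite inordK.
split=> //; rewrite inE; apply/andP; split.
  have := weight_upd m s (inord j); rewrite ms0 jval /= is_partitionE => w_upd; apply/eqP; nia.
rewrite /spt_at ffun_upd_same jval j_gt0 eqxx; apply/and5P; split=> //.
- apply/forallP => i; apply/implyP => lt_is.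
  by rewrite ffun_updE (ltn_eqF lt_is : (i == s) = false) zero_le_s ?(ltnW lt_is).
- apply/forallP => i; apply/implyP => lt_si; rewrite ffun_updE (gtn_eqF lt_si : (i == s) = false).
  have /andP[-> /implyP pos] := dm i; apply/implyP => /pos /andP[/andP[_ /eqP ->] _].
  by rewrite /= negbK; case: (odd s).
- rewrite -pm (nparts_above (fun i lt => zero_le_s i (ltnW lt))) ms0 add0n.
  apply/eqP; congr odd; apply: eq_bigr => i lt_si.
  by rewrite ffun_updE (gtn_eqF lt_si : (i == s) = false).
Qed.

Lemma spt_set_remove m :
  m \in spt_set -> m s = inord j /\ ffun_upd m s ord0 \in rest_set.
Proof.
rewrite inE is_partitionE /spt_at.
move=> /andP[/eqP wm /and5P[_ /forallP below /eqP msj /forallP above /eqP par]].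
have zero_below (i : 'I_n) : (i < s)%N -> m i = 0%N :> nat.
  by move=> lt_is; apply/eqP; have /implyP := below i; apply.
split; first by apply/val_inj; rewrite /= inordK -msj ?ltn_ord.
rewrite inE; apply/and3P; split.
- apply/forallP => i; rewrite ffun_updE.
  case: (ltngtP i s) => [lt_is | lt_si | /val_inj ->]; last by rewrite eqxx.
    by rewrite (ltn_eqF lt_is : (i == s) = false) zero_below.
  rewrite (gtn_eqF lt_si : (i == s) = false).
  have /implyP/(_ lt_si)/andP[-> /implyP odd_i] := above i; apply/implyP => /odd_i.
  by rewrite /ap2 ltn_ord andbT ltnS lt_si /= negbK; case: (odd i); case: (odd s).
- by have := weight_upd m s ord0; rewrite msj /= => w_upd; apply/eqP; nia.
- have := nparts_upd m s ord0; rewrite (nparts_above zero_below) addn0 addnC => /addnI ->.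
  by rewrite par.
Qed.

Lemma card_spt_set : #|spt_set| = #|rest_set|.
Proof.
apply/esym/(card_ffun_upd (x := s) (u := ord0) (v := inord j)).
  exact: spt_set_add.
by move=> m /spt_set_remove.
Qed.

End SmallestPart.

Lemma card_p_dpar par :
  #|[set m : multfun n | is_partition m &&
     [forall i : 'I_n, (m i <= 1) && ((0 < m i) ==> (odd i.+1 == par))]]| =
  (#|dpart_set (ap2 (if par then 1 else 2)) n n false|
   + #|dpart_set (ap2 (if par then 1 else 2)) n n true|)%N.
Proof.
have dparE m : [forall i : 'I_n, (m i <= 1) && ((0 < m i) ==> (odd i.+1 == par))] =
               distinct_parts (ap2 (if par then 1 else 2)) n m.
  apply: eq_forallb => i; rewrite ltn_ord andbT /ap2.
  by case: par; case: (nat_of_ord i) => [|[|i']].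
rewrite -(cardsID [set m : multfun n | odd (nparts m)]) addnC.
congr (_ + _); apply: eq_card => m; rewrite !inE dparE is_partitionE eqz_nat;
  by case: (odd _); case: (_ == _); case: distinct_parts.
Qed.

End Multiplicities.

Definition spt_term b j (n : int) s := dcount (ap2 s.+2) (n - (j * s.+1)%:Z)%R b.

Lemma Bcount_dcount b j (n : int) (N : nat) : (0 < j)%N -> (n <= N%:Z)%R ->
  Bcount b j n = (\sum_(0 <= s < N) spt_term b j n s)%N.
Proof.
move=> j_gt0; case: n => n le_nN; last first.
  by rewrite big1 // => s _; rewrite /spt_term dcount_neg //; lia.
have -> : Bcount b j n = (\sum_(0 <= s < n) spt_term b j n s)%N.
  rewrite big_mkord /= card_Sptjdo; apply: eq_bigr => s _.
  by rewrite card_spt_set // card_dpart_set // dcount_upto_ge //; lia.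
rewrite (big_nat_widen 0 n N) ?lez_nat // big_mkcond; apply: eq_bigr => s _.
by case: ifP => // /negbT; rewrite -leqNgt => le_ns; rewrite /spt_term dcount_neg //; nia.
Qed.

Lemma p_dpar_dcount par (n : int) : p_dpar par n =
  (dcount (ap2 (if par then 1 else 2)) n false + dcount (ap2 (if par then 1 else 2)) n true)%N.
Proof.
case: n => n; last by rewrite !dcount_neg.
by rewrite /p_dpar card_p_dpar !card_dpart_set.
Qed.

Lemma p_do_odd (z : int) : p_do (z * 2 + 1)%R =
  (dcount (ap2 3) (z * 2)%R false + dcount (ap2 3) (z * 2 + 1)%R true)%N.
Proof.
have odd_ap2 x : ap2 3 x -> odd x by case/andP=> _ /eqP.
have [even0 odd0] := (dcount_parity z false odd_ap2, dcount_parity z true odd_ap2).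
rewrite /p_do p_dpar_dcount [dcount _ _ false]dcount_ap2 // [dcount _ _ true]dcount_ap2 //.
by rewrite addrK odd0 -[(z * 2)%R]addr0 even0 addr0 !add0n addnC.
Qed.

Local Open Scope ring_scope.

Lemma spt_term_0 (n : int) k :
  (spt_term false k.+1 n 0 + spt_term true k (n - 1) 0 = p_de (n - k%:Z - 1))%N.
Proof. by rewrite /spt_term /p_de p_dpar_dcount; congr (dcount _ _ _ + dcount _ _ _); lia. Qed.

Lemma spt_term_1 (z : int) k :
  (spt_term false k.+1 (2 * z) 1 + spt_term true k (2 * z - 1) 1
   = p_do (2 * z - 2 * k%:Z - 1))%N.
Proof.
rewrite (_ : 2 * z - 2 * k%:Z - 1 = (z - k%:Z - 1) * 2 + 1); last by lia.
by rewrite /spt_term p_do_odd; congr (dcount _ _ _ + dcount _ _ _); lia.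
Qed.

Lemma spt_term_SS (n : int) k s :
  (spt_term false k.+1 n s.+2 + spt_term true k (n - 1) s.+2
   = spt_term true k (n - 2 * k%:Z - 1) s)%N.
Proof. by rewrite /spt_term [RHS]dcount_ap2 // addnC; congr (dcount _ _ _ + dcount _ _ _); lia. Qed.

Theorem lemma2 (k t : nat) (hk : (1 <= k)%N) (ht : (1 <= t)%N) :
  (B0 k.+1 (2 * t%:Z) + B1 k (2 * t%:Z - 1)
   = B1 k (2 * t%:Z - 2 * k%:Z - 1) + p_de (2 * t%:Z - k%:Z - 1)
     + p_do (2 * t%:Z - 2 * k%:Z - 1))%N.
Proof.
case: t ht => // t _; rewrite /B0 /B1.
rewrite (@Bcount_dcount _ _ (_ - 2 * _ - 1) (2 * t)) ?(@Bcount_dcount _ _ _ (2 * t).+2) //; try lia.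
rewrite -big_split !big_nat_recl //= spt_term_0 spt_term_1.
under eq_bigr => s _ do rewrite spt_term_SS.
by rewrite addnA addnC addnA.
Qed.
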